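(* Suppose $T\in\mathcal B(\mathcal H)$ is quasitriangular and $\{P_n\}$ is a filtration with $\|(I-P_n)TP_n\|\to0$. Let $T_n=P_nT|_{P_n\mathcal H}$, an operator on the finite-dimensional space $P_n\mathcal H$. Then $j_{T_n}(\lambda)\to j_T(\lambda)$ for every $\lambda\in\mathbb C$.
   Context: $\mathcal H$ is a complex separable Hilbert space. For an operator $A$ on a Hilbert space $\mathcal K$, $j_A(z)=\inf\{\|(A-z)h\|:h\in\mathcal K,\|h\|=1\}$. A filtration is a sequence $\{P_n\}$ of finite-rank orthogonal projections with $\operatorname{Ran}P_n\subseteq\operatorname{Ran}P_{n+1}$ and $\bigcup_n\operatorname{Ran}P_n$ dense in $\mathcal H$. $T$ is quasitriangular if there is a filtration $\{P_n\}$ with $\|(I-P_n)TP_n\|\to0$. *)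

From Stdlib Require Import Reals ClassicalEpsilon.
Open Scope R_scope.

Record Cplx := mkC { re : R; im : R }.
Definition C0 : Cplx := mkC 0 0.
Definition C1 : Cplx := mkC 1 0.
Definition Cadd (a b : Cplx) : Cplx := mkC (re a + re b) (im a + im b).
Definition Cmul (a b : Cplx) : Cplx :=
  mkC (re a * re b - im a * im b) (re a * im b + im a * re b).
Definition Cconj (a : Cplx) : Cplx := mkC (re a) (- im a).

Record Hilbert := {
  carrier :> Type;
  vzero : carrier;
  vadd : carrier -> carrier -> carrier;
  vscal : Cplx -> carrier -> carrier;
  inner : carrier -> carrier -> Cplx;
  vadd_assoc : forall x y z, vadd x (vadd y z) = vadd (vadd x y) z;
  vadd_comm : forall x y, vadd x y = vadd y x;
  vadd_zero : forall x, vadd x vzero = x;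
  vadd_opp : forall x, vadd x (vscal (mkC (-1) 0) x) = vzero;
  vscal_one : forall x, vscal C1 x = x;
  vscal_assoc : forall a b x, vscal a (vscal b x) = vscal (Cmul a b) x;
  vscal_addv : forall a x y, vscal a (vadd x y) = vadd (vscal a x) (vscal a y);
  vscal_adds : forall a b x, vscal (Cadd a b) x = vadd (vscal a x) (vscal b x);
  inner_add : forall x y z, inner (vadd x y) z = Cadd (inner x z) (inner y z);
  inner_scal : forall a x y, inner (vscal a x) y = Cmul a (inner x y);
  inner_conj : forall x y, inner y x = Cconj (inner x y);
  inner_pos : forall x, 0 <= re (inner x x);
  inner_def : forall x, re (inner x x) = 0 -> x = vzero;
  hcomplete : forall u : nat -> carrier,
    (forall eps, eps > 0 -> exists N, forall m n, (m >= N)%nat -> (n >= N)%nat ->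
       sqrt (re (inner (vadd (u m) (vscal (mkC (-1) 0) (u n)))
                       (vadd (u m) (vscal (mkC (-1) 0) (u n))))) < eps) ->
    exists l, forall eps, eps > 0 -> exists N, forall n, (n >= N)%nat ->
       sqrt (re (inner (vadd (u n) (vscal (mkC (-1) 0) l))
                       (vadd (u n) (vscal (mkC (-1) 0) l)))) < eps;
  hseparable : exists d : nat -> carrier, forall x eps, eps > 0 ->
    exists k, sqrt (re (inner (vadd x (vscal (mkC (-1) 0) (d k)))
                              (vadd x (vscal (mkC (-1) 0) (d k))))) < eps
}.

Arguments vzero {h}.
Arguments vadd {h}.
Arguments vscal {h}.
Arguments inner {h}.

Definition vsub {H : Hilbert} (x y : H) : H := vadd x (vscal (mkC (-1) 0) y).
Definition hnorm {H : Hilbert} (x : H) : R := sqrt (re (inner x x)).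

Definition is_glb (S : R -> Prop) (m : R) : Prop :=
  (forall x, S x -> m <= x) /\ (forall b, (forall x, S x -> b <= x) -> b <= m).
Definition Rinf (S : R -> Prop) : R :=
  epsilon (inhabits 0) (fun m => is_glb S m).

Definition linear_op {H : Hilbert} (A : H -> H) : Prop :=
  (forall x y, A (vadd x y) = vadd (A x) (A y)) /\
  (forall a x, A (vscal a x) = vscal a (A x)).

Definition bounded_op {H : Hilbert} (A : H -> H) : Prop :=
  linear_op A /\ exists M, forall x, hnorm (A x) <= M * hnorm x.

Definition opnorm {H : Hilbert} (A : H -> H) : R :=
  Rinf (fun c => 0 <= c /\ forall x, hnorm (A x) <= c * hnorm x).

Definition Ran {H : Hilbert} (P : H -> H) (v : H) : Prop := exists x, v = P x.

Definition orth_proj {H : Hilbert} (P : H -> H) : Prop :=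
  linear_op P /\ (forall x, P (P x) = P x) /\
  (forall x y, inner (P x) y = inner x (P y)).

Fixpoint lincomb {H : Hilbert} (n : nat) (c : nat -> Cplx) (d : nat -> H) : H :=
  match n with
  | O => vzero
  | S k => vadd (lincomb k c d) (vscal (c k) (d k))
  end.

Definition finite_rank {H : Hilbert} (P : H -> H) : Prop :=
  exists (n : nat) (d : nat -> H), forall x, exists c, P x = lincomb n c d.

Definition filtration {H : Hilbert} (P : nat -> H -> H) : Prop :=
  (forall n, orth_proj (P n) /\ finite_rank (P n)) /\
  (forall n v, Ran (P n) v -> Ran (P (S n)) v) /\
  (forall x eps, eps > 0 -> exists n v, Ran (P n) v /\ hnorm (vsub x v) < eps).

Definition quasitriangular {H : Hilbert} (T : H -> H) : Prop :=
  exists P : nat -> H -> H, filtration P /\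
    Un_cv (fun n => opnorm (fun x => vsub (T (P n x)) (P n (T (P n x))))) 0.

Definition jfun {H : Hilbert} (T : H -> H) (z : Cplx) : R :=
  Rinf (fun r => exists h : H, hnorm h = 1 /\ r = hnorm (vsub (T h) (vscal z h))).

(* j_{T_n}(z) for T_n = P T |_{Ran P}, acting on the finite-dimensional space Ran P *)
Definition jfun_compression {H : Hilbert} (P T : H -> H) (z : Cplx) : R :=
  Rinf (fun r => exists h : H, Ran P h /\ hnorm h = 1 /\
                   r = hnorm (vsub (P (T h)) (vscal z h))).

From Pilot Require Import Defs.
From Stdlib Require Import Reals Lra Psatz Classical ClassicalEpsilon.
Open Scope R_scope.

(* If [h] is a unit vector in [Ran P_n], then [(T - l) h] is the sum of [P_n (T - l) h]
   and [(I - P_n) T P_n h], so [j_T(l) <= j_{T_n}(l) + ||(I - P_n) T P_n||], and the last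
   term tends to [0].  Conversely, if the unit vector [h] nearly attains [j_T(l)],
   then [P_n h] lies in [Ran P_n] and tends to [h], so
   [j_{T_n}(l) <= ||(T - l) P_n h|| / ||P_n h||] is eventually close to [||(T - l) h||]. *)

Lemma Cplx_eq (a b : Cplx) : re a = re b -> im a = im b -> a = b.
Proof. destruct a, b; simpl; intros; subst; reflexivity. Qed.

Lemma quadratic_nonneg_discr (a b c : R) :
  0 <= c -> (forall t, 0 <= a + 2 * b * t + c * t * t) -> b * b <= a * c.
Proof.
  intros Hc Ht. destruct (Rle_lt_or_eq_dec 0 c Hc) as [Hc'|<-].
  - specialize (Ht (- b / c)).
    replace (a + 2 * b * (- b / c) + c * (- b / c) * (- b / c))
      with ((a * c - b * b) / c) in Ht by (field; lra).
    apply Rmult_le_compat_r with (r := c) in Ht; [|lra].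
    unfold Rdiv in Ht. rewrite Rmult_assoc, Rinv_l, Rmult_1_r in Ht by lra. lra.
  - destruct (Req_dec b 0) as [->|Hb]; [lra|].
    specialize (Ht (- (a + 1) / (2 * b))).
    replace (a + 2 * b * (- (a + 1) / (2 * b)) + 0 * (- (a + 1) / (2 * b)) * (- (a + 1) / (2 * b)))
      with (-1) in Ht by (field; lra).
    lra.
Qed.

Section VectorAlgebra.
Context {H : Hilbert}.
Implicit Types x y z w : H.

Local Notation vneg x := (vscal (mkC (-1) 0) x).

Lemma vadd0l x : vadd vzero x = x.
Proof. rewrite vadd_comm; apply vadd_zero. Qed.

Lemma vadd_oppl x : vadd (vneg x) x = vzero.
Proof. rewrite vadd_comm; apply vadd_opp. Qed.

Lemma vneg_involutive x : vneg (vneg x) = x.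
Proof.
  rewrite vscal_assoc. replace (Cmul _ _) with Defs.C1 by (apply Cplx_eq; simpl; ring).
  apply vscal_one.
Qed.

Lemma vadd_left_comm x y z : vadd x (vadd y z) = vadd y (vadd x z).
Proof. rewrite !vadd_assoc, (vadd_comm _ x y); reflexivity. Qed.

Lemma vadd_addKA x y z w : vadd (vadd x y) (vadd z w) = vadd (vadd x z) (vadd y w).
Proof. rewrite <- !vadd_assoc. f_equal. apply vadd_left_comm. Qed.

Lemma vsub_addK x y : vadd y (vsub x y) = x.
Proof. unfold vsub. rewrite vadd_left_comm, vadd_opp, vadd_zero. reflexivity. Qed.

Lemma vsub_add_vsub x y z : vadd (vsub x y) (vsub z x) = vsub z y.
Proof.
  unfold vsub. rewrite vadd_comm, <- vadd_assoc, (vadd_assoc _ _ x), vadd_oppl, vadd0l.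
  reflexivity.
Qed.

Lemma vsub_vsub_vsub x y z : vsub (vsub x z) (vsub y z) = vsub x y.
Proof.
  unfold vsub. rewrite vscal_addv, vneg_involutive, vadd_addKA, vadd_oppl, vadd_zero.
  reflexivity.
Qed.

Lemma vscal_vsub a x y : vscal a (vsub x y) = vsub (vscal a x) (vscal a y).
Proof.
  unfold vsub. rewrite vscal_addv, !vscal_assoc.
  replace (Cmul a _) with (Cmul (mkC (-1) 0) a) by (apply Cplx_eq; simpl; ring).
  reflexivity.
Qed.

Lemma linear_vsub (A : H -> H) : linear_op A -> forall x y, A (vsub x y) = vsub (A x) (A y).
Proof. intros [Ladd Lscal] x y. unfold vsub. rewrite Ladd, Lscal. reflexivity. Qed.

End VectorAlgebra.

Section Norm.
Context {H : Hilbert}.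
Implicit Types x y : H.

Definition nsq x : R := re (inner x x).

Lemma inner_add_r x y z : inner x (vadd y z) = Cadd (inner x y) (inner x z).
Proof.
  rewrite inner_conj, inner_add, (inner_conj _ y x), (inner_conj _ z x).
  apply Cplx_eq; simpl; ring.
Qed.

Lemma inner_scal_r a x y : inner x (vscal a y) = Cmul (Cconj a) (inner x y).
Proof. rewrite inner_conj, inner_scal, (inner_conj _ y x). apply Cplx_eq; simpl; ring. Qed.

Lemma im_inner_self x : im (inner x x) = 0.
Proof. pose proof (f_equal im (inner_conj _ x x)) as E. simpl in E. lra. Qed.

Lemma nsq_add x y : nsq (vadd x y) = nsq x + nsq y + 2 * re (inner x y).
Proof.
  unfold nsq. rewrite inner_add, !inner_add_r, (inner_conj _ x y). simpl. ring.
Qed.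

Lemma nsq_scal a x : nsq (vscal a x) = (re a * re a + im a * im a) * nsq x.
Proof.
  unfold nsq. rewrite inner_scal, inner_scal_r. simpl. rewrite im_inner_self. ring.
Qed.

Lemma hnorm_ge0 x : 0 <= hnorm x.
Proof. apply sqrt_pos. Qed.

Lemma hnorm_sqr x : hnorm x * hnorm x = nsq x.
Proof. apply sqrt_sqrt, inner_pos. Qed.

Lemma hnorm_eq0 x : hnorm x = 0 -> x = vzero.
Proof. intro E. apply inner_def. fold (nsq x). rewrite <- hnorm_sqr, E. ring. Qed.

Lemma hnorm_scal a x : hnorm (vscal a x) = sqrt (re a * re a + im a * im a) * hnorm x.
Proof.
  unfold hnorm. fold (nsq (vscal a x)) (nsq x).
  rewrite nsq_scal, sqrt_mult; [reflexivity | nra | apply inner_pos].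
Qed.

Lemma hnorm_scal_real c x : 0 <= c -> hnorm (vscal (mkC c 0) x) = c * hnorm x.
Proof.
  intro Hc. rewrite hnorm_scal. simpl.
  replace (c * c + 0 * 0) with (c * c) by ring. rewrite sqrt_square; auto.
Qed.

Lemma hnorm_opp x : hnorm (vscal (mkC (-1) 0) x) = hnorm x.
Proof.
  rewrite hnorm_scal. simpl. replace (-1 * -1 + 0 * 0) with 1 by ring. rewrite sqrt_1; ring.
Qed.

Lemma hnorm_normalize x : 0 < hnorm x -> hnorm (vscal (mkC (/ hnorm x) 0) x) = 1.
Proof.
  intro Hx. rewrite hnorm_scal_real by (left; apply Rinv_0_lt_compat, Hx). field. lra.
Qed.

Lemma cauchy_schwarz x y : re (inner x y) <= hnorm x * hnorm y.
Proof.
  assert (Hdiscr : re (inner x y) * re (inner x y) <= nsq x * nsq y).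
  { apply quadratic_nonneg_discr; [apply inner_pos|]. intro t.
    pose proof (inner_pos _ (vadd x (vscal (mkC t 0) y))) as Hpos.
    fold (nsq (vadd x (vscal (mkC t 0) y))) in Hpos.
    rewrite nsq_add, nsq_scal, inner_scal_r in Hpos. simpl in Hpos. nra. }
  rewrite <- hnorm_sqr, <- (hnorm_sqr y) in Hdiscr.
  pose proof (hnorm_ge0 x). pose proof (hnorm_ge0 y).
  destruct (Rle_or_lt (re (inner x y)) 0); [nra|].
  apply Rsqr_incr_0_var; unfold Rsqr; nra.
Qed.

Lemma hnorm_add_le x y : hnorm (vadd x y) <= hnorm x + hnorm y.
Proof.
  pose proof (cauchy_schwarz x y). pose proof (hnorm_ge0 x). pose proof (hnorm_ge0 y).
  apply Rsqr_incr_0_var; unfold Rsqr; [|nra].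
  rewrite hnorm_sqr, nsq_add, <- !hnorm_sqr. nra.
Qed.

Lemma hnorm_sub_le x y : hnorm (vsub x y) <= hnorm x + hnorm y.
Proof. rewrite <- (hnorm_opp y). apply hnorm_add_le. Qed.

Lemma hnorm_vsubC x y : hnorm (vsub x y) = hnorm (vsub y x).
Proof.
  rewrite <- hnorm_opp. unfold vsub.
  rewrite vscal_addv, vneg_involutive, vadd_comm. reflexivity.
Qed.

Lemma hnorm_le_add_sub x y : hnorm y <= hnorm x + hnorm (vsub y x).
Proof. rewrite <- (vsub_addK y x) at 1. apply hnorm_add_le. Qed.

Lemma Rabs_hnorm_sub_le x y : Rabs (hnorm x - hnorm y) <= hnorm (vsub x y).
Proof.
  pose proof (hnorm_le_add_sub x y) as Hy. pose proof (hnorm_le_add_sub y x) as Hx.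
  rewrite hnorm_vsubC in Hy. apply Rabs_le; lra.
Qed.

End Norm.

Section Infimum.
Variables (S : R -> Prop) (m : R).
Hypothesis S_lb : forall x, S x -> m <= x.

Lemma Rinf_glb x0 : S x0 -> is_glb S (Rinf S).
Proof.
  intro Sx0. apply (epsilon_spec (inhabits 0) (fun b => is_glb S b)).
  destruct (completeness (fun y => S (- y))) as [M [Hub Hlub]].
  - exists (- m). intros y Sy. apply S_lb in Sy. lra.
  - exists (- x0). rewrite Ropp_involutive. exact Sx0.
  - exists (- M). split.
    + intros x Sx. enough (- x <= M) by lra. apply Hub. rewrite Ropp_involutive. exact Sx.
    + intros b Hb. enough (M <= - b) by lra. apply Hlub. intros y Sy. apply Hb in Sy. lra.
Qed.

Lemma Rinf_le x : S x -> Rinf S <= x.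
Proof. intro Sx. apply (proj1 (Rinf_glb x Sx)), Sx. Qed.

Lemma Rinf_ge b x0 : S x0 -> (forall x, S x -> b <= x) -> b <= Rinf S.
Proof. intros Sx0 Hb. apply (proj2 (Rinf_glb x0 Sx0)), Hb. Qed.

Lemma Rinf_approx eps x0 : S x0 -> 0 < eps -> exists x, S x /\ x < Rinf S + eps.
Proof.
  intros Sx0 Heps. apply NNPP. intro Hnone.
  enough (Rinf S + eps <= Rinf S) by lra.
  apply (Rinf_ge _ x0 Sx0). intros x Sx.
  apply Rnot_lt_le. intro Hlt. apply Hnone. eauto.
Qed.

End Infimum.

Lemma Un_cv_const (c : R) : Un_cv (fun _ => c) c.
Proof.
  intros eps Heps. exists O. intros. unfold R_dist. rewrite Rminus_diag, Rabs_R0. exact Heps.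
Qed.

Lemma Un_cv_eventually_gt (u : nat -> R) (l c : R) :
  Un_cv u l -> c < l -> exists N, forall n, (n >= N)%nat -> c < u n.
Proof.
  intros Hu Hc. destruct (Hu (l - c)) as [N HN]; [lra|].
  exists N. intros n Hn. specialize (HN n Hn). unfold R_dist in HN.
  apply Rabs_def2 in HN. lra.
Qed.

Section Projections.
Context {H : Hilbert}.
Variable P : H -> H.
Hypothesis HP : orth_proj P.

Lemma orth_proj_fixed v : Ran P v -> P v = v.
Proof. destruct HP as [_ [Pidem _]]. intros [x ->]. apply Pidem. Qed.

Lemma orth_proj_orthogonal x y : re (inner (P x) (vsub y (P y))) = 0.
Proof.
  destruct HP as [_ [Pidem Psym]]. unfold vsub.
  rewrite inner_add_r, inner_scal_r, !Psym, Pidem. simpl. ring.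
Qed.

Lemma nsq_orth_proj x : nsq x = nsq (P x) + nsq (vsub x (P x)).
Proof.
  rewrite <- (vsub_addK x (P x)) at 1.
  rewrite nsq_add, orth_proj_orthogonal. ring.
Qed.

Lemma hnorm_orth_proj_le x : hnorm (P x) <= hnorm x.
Proof.
  apply sqrt_le_1_alt. fold (nsq x) (nsq (P x)).
  rewrite (nsq_orth_proj x). pose proof (inner_pos _ (vsub x (P x))). unfold nsq. lra.
Qed.

Lemma hnorm_orth_proj_compl_le x : hnorm (vsub x (P x)) <= hnorm x.
Proof.
  apply sqrt_le_1_alt. fold (nsq x) (nsq (vsub x (P x))).
  rewrite (nsq_orth_proj x). pose proof (inner_pos _ (P x)). unfold nsq. lra.
Qed.

End Projections.

Section Operators.
Context {H : Hilbert}.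
Implicit Types (A T : H -> H) (x y : H).

Lemma bounded_op_nonneg_bound T :
  bounded_op T -> exists M, 0 <= M /\ forall x, hnorm (T x) <= M * hnorm x.
Proof.
  intros [_ [M HM]]. exists (Rmax M 0). split; [apply Rmax_r|].
  intro x. eapply Rle_trans; [apply HM|].
  apply Rmult_le_compat_r; [apply hnorm_ge0 | apply Rmax_l].
Qed.

Lemma hnorm_le_opnorm A M :
  0 <= M -> (forall x, hnorm (A x) <= M * hnorm x) ->
  forall x, hnorm (A x) <= opnorm A * hnorm x.
Proof.
  intros HM0 HM x.
  set (S := fun c => 0 <= c /\ forall x, hnorm (A x) <= c * hnorm x).
  assert (S_lb : forall c, S c -> 0 <= c) by (intros c [? _]; auto).
  assert (SM : S M) by (split; auto).
  destruct (hnorm_ge0 x) as [Hx|Hx].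
  - replace (hnorm (A x)) with (hnorm (A x) / hnorm x * hnorm x) by (field; lra).
    apply (Rmult_le_compat_r _ _ _ (hnorm_ge0 x)).
    apply (Rinf_ge S 0 S_lb _ M SM). intros c [_ Hc].
    apply (Rmult_le_reg_r (hnorm x)); [exact Hx|].
    replace (hnorm (A x) / hnorm x * hnorm x) with (hnorm (A x)) by (field; lra).
    apply Hc.
  - rewrite <- Hx, Rmult_0_r. specialize (HM x). rewrite <- Hx, Rmult_0_r in HM. exact HM.
Qed.

Definition shift_op T (l : Cplx) x : H := vsub (T x) (vscal l x).

Lemma shift_op_vsub T l x y :
  linear_op T -> shift_op T l (vsub x y) = vsub (shift_op T l x) (shift_op T l y).
Proof.
  intro LT. unfold shift_op. rewrite (linear_vsub T LT), vscal_vsub.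
  unfold vsub. rewrite !vscal_addv, !vneg_involutive. apply vadd_addKA.
Qed.

Lemma shift_op_lipschitz T l : bounded_op T ->
  exists K, 0 <= K /\ forall x y,
    hnorm (vsub (shift_op T l x) (shift_op T l y)) <= K * hnorm (vsub x y).
Proof.
  intro HT. destruct (bounded_op_nonneg_bound T HT) as [M [HM0 HM]].
  set (c := sqrt (re l * re l + im l * im l)).
  exists (M + c). split; [pose proof (sqrt_pos (re l * re l + im l * im l)); unfold c; lra|].
  intros x y. rewrite <- shift_op_vsub by apply HT.
  eapply Rle_trans; [apply hnorm_sub_le|].
  rewrite hnorm_scal. specialize (HM (vsub x y)). fold c. lra.
Qed.

Lemma Un_cv_hnorm_lipschitz A K x (u : nat -> H) :
  0 <= K -> (forall y z, hnorm (vsub (A y) (A z)) <= K * hnorm (vsub y z)) ->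
  Un_cv (fun n => hnorm (vsub x (u n))) 0 ->
  Un_cv (fun n => hnorm (A (u n))) (hnorm (A x)).
Proof.
  intros HK0 HK Hu eps Heps.
  destruct (Hu (eps / (K + 1))) as [N HN]; [apply Rdiv_lt_0_compat; lra|].
  exists N. intros n Hn. specialize (HN n Hn). unfold R_dist in *.
  rewrite Rminus_0_r, Rabs_pos_eq in HN by apply hnorm_ge0.
  eapply Rle_lt_trans; [apply Rabs_hnorm_sub_le|].
  eapply Rle_lt_trans; [apply HK|]. rewrite hnorm_vsubC.
  apply Rmult_lt_compat_r with (r := K + 1) in HN; [|lra].
  replace (eps / (K + 1) * (K + 1)) with eps in HN by (field; lra).
  pose proof (hnorm_ge0 (vsub x (u n))). nra.
Qed.

End Operators.

Section Filtration.
Context {H : Hilbert}.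
Variable P : nat -> H -> H.
Hypothesis HP : filtration P.

Lemma filtration_Ran_le n m v : (n <= m)%nat -> Ran (P n) v -> Ran (P m) v.
Proof. destruct HP as [_ [Hnext _]]. induction 1; auto. Qed.

Lemma filtration_cv x : Un_cv (fun n => hnorm (vsub x (P n x))) 0.
Proof.
  destruct HP as [Hproj [_ Hdense]]. intros eps Heps.
  destruct (Hdense x eps Heps) as [k [v [Hv Hxv]]].
  exists k. intros n Hn. destruct (Hproj n) as [Pn _].
  assert (Pv : P n v = v) by (apply (orth_proj_fixed _ Pn), (filtration_Ran_le k); auto).
  unfold R_dist. rewrite Rminus_0_r, Rabs_pos_eq by apply hnorm_ge0.
  rewrite <- (vsub_vsub_vsub x (P n x) v). rewrite <- Pv at 2.
  rewrite <- (linear_vsub _ (proj1 Pn)).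
  eapply Rle_lt_trans; [apply (hnorm_orth_proj_compl_le _ Pn) | exact Hxv].
Qed.

Lemma filtration_hnorm_cv x : Un_cv (fun n => hnorm (P n x)) (hnorm x).
Proof.
  apply (Un_cv_hnorm_lipschitz (fun y => y) 1); [lra | intros; lra | apply filtration_cv].
Qed.

Lemma filtration_eventually_unit :
  (exists x : H, x <> vzero) ->
  exists N, forall n, (n >= N)%nat -> exists h, Ran (P n) h /\ hnorm h = 1.
Proof.
  intros [x Hx].
  assert (Hx0 : 0 < hnorm x).
  { destruct (hnorm_ge0 x) as [|E]; auto. exfalso. apply Hx, hnorm_eq0. auto. }
  destruct (Un_cv_eventually_gt _ _ 0 (filtration_hnorm_cv x) Hx0) as [N HN].
  exists N. intros n Hn. exists (vscal (mkC (/ hnorm (P n x)) 0) (P n x)). split.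
  - exists (vscal (mkC (/ hnorm (P n x)) 0) x). symmetry. apply (proj2 (proj1 (proj1 (proj1 HP n)))).
  - apply hnorm_normalize, HN, Hn.
Qed.

End Filtration.

Section SpectralDistance.
Context {H : Hilbert}.
Variables (T : H -> H) (l : Cplx).

Lemma jfun_le h : hnorm h = 1 -> jfun T l <= hnorm (shift_op T l h).
Proof.
  intro Hh. apply (Rinf_le _ 0).
  - intros r [g [_ ->]]. apply hnorm_ge0.
  - exists h. auto.
Qed.

Lemma jfun_approx eps : (exists h : H, hnorm h = 1) -> 0 < eps ->
  exists h, hnorm h = 1 /\ hnorm (shift_op T l h) < jfun T l + eps.
Proof.
  intros [e He] Heps. unfold jfun.
  set (S := fun r => exists h : H, hnorm h = 1 /\ r = hnorm (vsub (T h) (vscal l h))).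
  assert (S_lb : forall r, S r -> 0 <= r) by (intros r [g [_ ->]]; apply hnorm_ge0).
  destruct (Rinf_approx S 0 S_lb eps (hnorm (shift_op T l e))) as [r [[h [Hh ->]] Hr]];
    eauto.
  exists e. auto.
Qed.

Variable P : H -> H.

Lemma jfun_compression_le h : Ran P h -> hnorm h = 1 ->
  jfun_compression P T l <= hnorm (vsub (P (T h)) (vscal l h)).
Proof.
  intros Rh Hh. apply (Rinf_le _ 0).
  - intros r [g [_ [_ ->]]]. apply hnorm_ge0.
  - exists h. auto.
Qed.

Lemma jfun_compression_ge b : (exists h, Ran P h /\ hnorm h = 1) ->
  (forall h, Ran P h -> hnorm h = 1 -> b <= hnorm (vsub (P (T h)) (vscal l h))) ->
  b <= jfun_compression P T l.
Proof.
  intros [e [Re He]] Hb. apply (Rinf_ge _ 0) with (x0 := hnorm (vsub (P (T e)) (vscal l e))).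
  - intros r [g [_ [_ ->]]]. apply hnorm_ge0.
  - exists e. auto.
  - intros r [h [Rh [Hh ->]]]. auto.
Qed.

Hypothesis HP : orth_proj P.

Lemma jfun_compression_mul_le u : linear_op T -> P u = u -> 0 < hnorm u ->
  jfun_compression P T l * hnorm u <= hnorm (shift_op T l u).
Proof.
  intros LT Pu Hu. destruct HP as [[_ Pscal] _].
  set (c := / hnorm u). assert (Hc : 0 < c) by (apply Rinv_0_lt_compat, Hu).
  set (e := vscal (mkC c 0) u).
  assert (Pe : P e = e) by (unfold e; rewrite Pscal, Pu; reflexivity).
  assert (He : vsub (P (T e)) (vscal l e) = vscal (mkC c 0) (P (shift_op T l u))).
  { unfold e, shift_op. rewrite (proj2 LT), Pscal, (linear_vsub _ (proj1 HP)), Pscal, Pu.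
    rewrite vscal_vsub, !vscal_assoc. do 2 f_equal. apply Cplx_eq; simpl; ring. }
  pose proof (jfun_compression_le e) as Hj.
  rewrite He, hnorm_scal_real in Hj by lra.
  specialize (Hj (ex_intro _ e (eq_sym Pe)) (hnorm_normalize u Hu)).
  apply (Rmult_le_compat_r (hnorm u)) in Hj; [|lra].
  replace (c * hnorm (P (shift_op T l u)) * hnorm u) with (hnorm (P (shift_op T l u))) in Hj
    by (unfold c; field; lra).
  pose proof (hnorm_orth_proj_le P HP (shift_op T l u)). lra.
Qed.

Lemma jfun_sub_opnorm_le : bounded_op T -> (exists h, Ran P h /\ hnorm h = 1) ->
  jfun T l - opnorm (fun x => vsub (T (P x)) (P (T (P x)))) <= jfun_compression P T l.
Proof.
  intros HT Hunit. destruct (bounded_op_nonneg_bound T HT) as [M [HM0 HM]].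
  assert (Hoff : forall x, hnorm (vsub (T (P x)) (P (T (P x))))
                   <= opnorm (fun x => vsub (T (P x)) (P (T (P x)))) * hnorm x).
  { apply (hnorm_le_opnorm _ M HM0). intro x.
    eapply Rle_trans; [apply (hnorm_orth_proj_compl_le P HP)|].
    eapply Rle_trans; [apply HM|].
    apply Rmult_le_compat_l; [exact HM0 | apply (hnorm_orth_proj_le P HP)]. }
  apply jfun_compression_ge; [exact Hunit|]. intros h Rh Hh.
  pose proof (Hoff h) as Hb. rewrite (orth_proj_fixed P HP h Rh), Hh, Rmult_1_r in Hb.
  pose proof (jfun_le h Hh) as Hj. unfold shift_op in Hj.
  rewrite <- (vsub_add_vsub (P (T h)) (vscal l h) (T h)) in Hj.
  pose proof (hnorm_add_le (vsub (P (T h)) (vscal l h)) (vsub (T h) (P (T h)))). lra.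
Qed.

End SpectralDistance.

Lemma jfun_compression_eventually_lt {H : Hilbert} (P : nat -> H -> H) T l h eps :
  filtration P -> bounded_op T -> hnorm h = 1 -> 0 < eps ->
  exists N, forall n, (n >= N)%nat ->
    jfun_compression (P n) T l < hnorm (shift_op T l h) + eps.
Proof.
  intros HP HT Hh Heps. set (a := hnorm (shift_op T l h)).
  destruct (shift_op_lipschitz T l HT) as [K [HK0 HK]].
  assert (Hcv : Un_cv (fun n => (a + eps) * hnorm (P n h) - hnorm (shift_op T l (P n h)))
                      ((a + eps) * hnorm h - a)).
  { apply CV_minus.
    - apply CV_mult; [apply Un_cv_const | apply filtration_hnorm_cv, HP].
    - apply (Un_cv_hnorm_lipschitz _ K); auto. apply filtration_cv, HP. }
  rewrite Hh, Rmult_1_r in Hcv. replace (a + eps - a) with eps in Hcv by ring.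
  destruct (Un_cv_eventually_gt _ _ 0 Hcv Heps) as [N1 HN1].
  destruct (Un_cv_eventually_gt _ _ 0 (filtration_hnorm_cv P HP h)) as [N2 HN2]; [lra|].
  exists (max N1 N2). intros n Hn.
  specialize (HN1 n ltac:(lia)). specialize (HN2 n ltac:(lia)).
  destruct (proj1 HP n) as [Pn _].
  pose proof (jfun_compression_mul_le T l (P n) Pn (P n h) (proj1 HT)
                (proj1 (proj2 Pn) h) HN2) as Hj.
  apply (Rmult_lt_reg_r (hnorm (P n h))); [exact HN2|]. fold a. lra.
Qed.

Theorem lemma3p2 (H : Hilbert) (T : H -> H) (P : nat -> H -> H)
  (Hnontriv : exists x : H, x <> vzero)
  (HT : bounded_op T)
  (Hqt : quasitriangular T)
  (HP : filtration P)
  (Hcv : Un_cv (fun n => opnorm (fun x => vsub (T (P n x)) (P n (T (P n x))))) 0) :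
  forall lambda : Cplx,
    Un_cv (fun n => jfun_compression (P n) T lambda) (jfun T lambda).
Proof.
  intros l eps Heps.
  destruct (filtration_eventually_unit P HP Hnontriv) as [N0 HN0].
  destruct (HN0 N0 (le_n _)) as [e [_ He]].
  destruct (jfun_approx T l (eps / 2) (ex_intro _ e He)) as [h [Hh Hjh]]; [lra|].
  destruct (jfun_compression_eventually_lt P T l h (eps / 2) HP HT Hh) as [N1 HN1]; [lra|].
  destruct (Hcv eps Heps) as [N2 HN2].
  exists (max N0 (max N1 N2)). intros n Hn.
  pose proof (jfun_sub_opnorm_le T l (P n) (proj1 (proj1 HP n)) HT (HN0 n ltac:(lia))).
  specialize (HN1 n ltac:(lia)). specialize (HN2 n ltac:(lia)).
  unfold R_dist in *. rewrite Rminus_0_r in HN2.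
  apply Rabs_def2 in HN2. apply Rabs_def1; lra.
Qed.
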